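(* Let $G=(V,E)$ be a finite undirected graph with $m=|E|\ge1$ edges, let $k_u$ denote the degree of node $u$, and let $G'$ be the random multigraph produced from $G$ by the configuration model (see context). Fix distinct nodes $i,j\in V$ with $k_i\ge1$ and $k_j\ge1$, and let $P_{ij}=\frac1{k_i}+\frac1{k_j}$. Let $W_{ij}$ be the random weight of the pair $(i,j)$ computed in $G'$ by the rule in the context. Write $P_{\mathrm{adj}}=\Pr(i \text{ and } j \text{ connected in } G')$, and for each $r\in V\setminus\{i,j\}$, $P_{\mathrm{cn}}(r)=\Pr(i \text{ and } r \text{ connected and } j \text{ and } r \text{ connected in } G')$ and $P_{\mathrm{tri}}(r)=\Pr(i,r \text{ connected},\ j,r \text{ connected, and } i,j \text{ connected in } G')$. Then: 1. If $k_i=1$ or $k_j=1$, \[ E[W_{ij}]=\frac{P_{ij}\sum_{r\in V\setminus\{i,j\}}P_{\mathrm{cn}}(r)}{4}+P_{ij}P_{\mathrm{adj}}. \] 2. If $k_i>1$ and $k_j>1$, \[ E[W_{ij}]=\frac{P_{ij}}{4}\sum_{r\in V\setminus\{i,j\}}\big(P_{\mathrm{cn}}(r)-P_{\mathrm{tri}}(r)\big)+2P_{ij}\sum_{r\in V\setminus\{i,j\}}P_{\mathrm{tri}}(r)+3P_{ij}P_{\mathrm{adj}}. \] Moreover, with the functions $A,C,T$ defined by $A(a,b,M)=\sum_{t=1}^{\min\{a,b\}}(-1)^{t+1}\frac{\binom{a}{t}\binom{b}{t}t!}{\prod_{p=1}^{t}(2M+1-2p)}$, $C(a,b,c,M)=\sum_{t=1}^{\min\{b,c-1\}}(-1)^{t+1}A(a,c-t,M-t)\frac{\binom{c}{t}\binom{b}{t}t!}{\prod_{p=1}^{t}(2M+1-2p)}$,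 $T(a,b,c,M)=\sum_{t=1}^{\min\{a-1,b-1\}}(-1)^{t+1}C(a-t,b-t,c,M-t)\frac{\binom{a}{t}\binom{b}{t}t!}{\prod_{p=1}^{t}(2M+1-2p)}$ (empty sums $=0$), one has $P_{\mathrm{adj}}=A(k_i,k_j,m)$, $P_{\mathrm{cn}}(r)=C(k_i,k_j,k_r,m)$ and $P_{\mathrm{tri}}(r)=T(k_i,k_j,k_r,m)$, so that the two expressions above give $E[W_{ij}]$ explicitly in terms of the degrees and $m$.
   Context: Configuration model: given $G=(V,E)$ with $m$ edges and degrees $k_u$, each node $u$ is given $k_u$ stubs (half-edges), $2m$ in total; a perfect matching of the $2m$ stubs is chosen uniformly at random among all $\prod_{p=1}^{m}(2m+1-2p)$ perfect matchings, and each matched pair of stubs (attached to nodes $u$ and $v$) becomes an edge of the random multigraph $G'$. Degrees are preserved. Two distinct nodes $u,v$ are connected in $G'$ if at least one stub of $u$ is matched with a stub of $v$. A node $r\notin\{i,j\}$ is a common neighbour of $i$ and $j$ if $r$ is connected to both $i$ and $j$. Weight rule (evaluated in $G'$, with degrees $k_i,k_j\ge 1$): let $P_{ij}=\frac1{k_i}+\frac1{k_j}$ and $CN_{ij}=(\text{number of common neighbours of } i,j+1)P_{ij}$. Then $W_{ij}=\frac{CN_{ij}-P_{ij}}{4}$ if $i$ and $j$ are not connected; $W_{ij}=P_{ij}$ if $i,j$ are connected and ($k_i=1$ or $k_j=1$); $W_{ij}=2CN_{ij}+P_{ij}$ if $i,j$ are connected and $k_i>1$, $k_j>1$. *)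

From HB Require Import structures.
From mathcomp Require Import all_boot all_order all_algebra all_fingroup.
Set Implicit Arguments. Unset Strict Implicit. Unset Printing Implicit Defensive.
Import Order.TTheory GRing.Theory Num.Theory.
Local Open Scope ring_scope.

Section Config.
Variables (V : finType) (e : rel V).

Definition deg (u : V) : nat := #|[set v | e u v]|.

Definition edge_set : {set {set V}} :=
  [set E : {set V} | [exists u, exists v, e u v && (E == [set u; v])]].
Definition nedges : nat := #|edge_set|.

(* stubs (half-edges): node u owns k_u stubs *)
Definition stub := {u : V & 'I_(deg u)}.

(* perfect matchings of the stubs = fixed-point-free involutions *)
Definition matchings : {set {perm stub}} :=
  [set s : {perm stub} | [forall x, (s (s x) == x) && (s x != x)]].

Definition conn (s : {perm stub}) (u v : V) : bool :=
  [exists x : stub, (tag x == u) && (tag (s x) == v)].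

Definition ncn (s : {perm stub}) (i j : V) : nat :=
  #|[set r | [&& r != i, r != j, conn s i r & conn s j r]]|.

Variable R : realFieldType.

Definition Pij (i j : V) : R := (deg i)%:R^-1 + (deg j)%:R^-1.
Definition CNij (s : {perm stub}) (i j : V) : R := (ncn s i j).+1%:R * Pij i j.

Definition weight (s : {perm stub}) (i j : V) : R :=
  if ~~ conn s i j then (CNij s i j - Pij i j) / 4
  else if (deg i == 1%N) || (deg j == 1%N) then Pij i j
  else 2 * CNij s i j + Pij i j.

Definition Prob (ev : {perm stub} -> bool) : R :=
  #|[set s in matchings | ev s]|%:R / #|matchings|%:R.
Definition Expect (f : {perm stub} -> R) : R :=
  (\sum_(s in matchings) f s) / #|matchings|%:R.

End Config.

Definition dprod (R : realFieldType) (t M : nat) : R :=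
  \prod_(1 <= p < t.+1) (2 * M%:R + 1 - 2 * p%:R).

Definition Afun (R : realFieldType) (a b M : nat) : R :=
  \sum_(1 <= t < (minn a b).+1)
     (-1) ^+ t.+1 * ('C(a, t) * 'C(b, t) * t`!)%:R / dprod R t M.

Definition Cfun (R : realFieldType) (a b c M : nat) : R :=
  \sum_(1 <= t < (minn b c.-1).+1)
     (-1) ^+ t.+1 * Afun R a (c - t) (M - t)
       * ('C(c, t) * 'C(b, t) * t`!)%:R / dprod R t M.

Definition Tfun (R : realFieldType) (a b c M : nat) : R :=
  \sum_(1 <= t < (minn a.-1 b.-1).+1)
     (-1) ^+ t.+1 * Cfun R (a - t) (b - t) c (M - t)
       * ('C(a, t) * 'C(b, t) * t`!)%:R / dprod R t M.
Arguments Prob {V} e R ev.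
Arguments Expect {V} e {R} f.
Arguments weight {V e} R s i j.

From Pilot Require Import Defs.
From HB Require Import structures.
From mathcomp Require Import all_boot all_order all_algebra all_fingroup.
From mathcomp Require Import ring zify.
Import Order.TTheory GRing.Theory Num.Theory.
Set Implicit Arguments. Unset Strict Implicit. Unset Printing Implicit Defensive.

(* A configuration-model multigraph is a uniformly random fixed-point-free involution of
   the 2m stubs; there are (2m - 1)!! of them.  For disjoint stub sets X and Y, the
   involutions pairing some stub of X with a stub of Y are counted by inclusion-exclusion
   over t forced X-Y pairs: these can be chosen in C(|X|, t) C(|Y|, t) t! ways, the other
   stubs are then matched in (2m - 2t - 1)!! ways, and
   (2m - 1)!! / (2m - 2t - 1)!! = prod_{p=1}^{t} (2m + 1 - 2p).  This gives A.  The same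
   inclusion-exclusion, with "count of the inner event on the remaining stubs" in place of
   (2m - 2t - 1)!!, gives C from A and T from C.  In each degree case the weight W_ij is a
   fixed affine combination of the indicators of adjacency, common neighbours and
   triangles (an adjacent pair with an end of degree 1 has no common neighbour), so its
   expectation follows by linearity. *)

Lemma card_fibers (T I : finType) (A : {set T}) (g : T -> I) (B : {set I}) :
  {in A, forall a, g a \in B} ->
  #|A| = \sum_(y in B) #|[set a in A | g a == y]|.
Proof.
move=> gAB; rewrite -sum1_card (partition_big g (mem B)) //=.
by apply: eq_bigr => y _; rewrite -sum1_card; apply: eq_bigl => a; rewrite inE.
Qed.

Lemma card_split_pred (T : finType) (A : {set T}) (P Q : pred T) :
  #|[set a in A | P a]| = #|[set a in A | P a && Q a]| + #|[set a in A | P a && ~~ Q a]|.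
Proof.
rewrite -(cardsID [set a | Q a]); congr (_ + _); apply: eq_card => a; rewrite !inE;
  by case: (a \in A); case: (P a); case: (Q a).
Qed.

HB.lock Definition matching_on (S : finType) (D : {set S}) : {set {perm S}} :=
  [set s : {perm S} | [forall x, if x \in D then (s (s x) == x) && (s x != x) else s x == x]].

Section PartialMatchings.
Variable S : finType.
Implicit Types (D : {set S}) (s : {perm S}).

Lemma matching_onP D s :
  reflect (forall x, if x \in D then s (s x) = x /\ s x != x else s x = x)
          (s \in matching_on D).
Proof.
rewrite matching_on.unlock inE; apply: (iffP forallP) => sD x; have := sD x; case: (x \in D).
- by case/andP => /eqP.
- by move/eqP.
- by case=> -> ->; rewrite eqxx.
- by move=> ->.
Qed.

Section OneMatching.
Variables (D : {set S}) (s : {perm S}).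
Hypothesis sD : s \in matching_on D.

Lemma matching_on_out x : x \notin D -> s x = x.
Proof. by move: sD => /matching_onP/(_ x) + /negbTE xD; rewrite xD. Qed.

Lemma matching_on_neq x : x \in D -> s x != x.
Proof. by move: sD => /matching_onP/(_ x) + xD; rewrite xD => -[]. Qed.

Lemma matching_onK x : s (s x) = x.
Proof.
have [xD|xD] := boolP (x \in D); last by rewrite !matching_on_out.
by move: sD => /matching_onP/(_ x); rewrite xD => -[].
Qed.

Lemma matching_on_in x : x \in D -> s x \in D.
Proof.
move=> xD; apply: contraT => sxD.
by have := matching_on_neq xD; rewrite -{1}(matching_on_out sxD) matching_onK eqxx.
Qed.

End OneMatching.

Section Pair.
Variables (D : {set S}) (x y : S).
Hypotheses (xD : x \in D) (yD : y \in D) (xy : x != y).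

Lemma matching_on_unpair s :
  s \in matching_on D -> s x = y -> (s * tperm x y)%g \in matching_on (D :\ x :\ y).
Proof.
move=> sD sx; have sy : s y = x by rewrite -sx (matching_onK sD).
apply/matching_onP => z; rewrite !inE !permM.
have [->|zy] /= := eqVneq z y; first by rewrite sy tpermL.
have [->|zx] /= := eqVneq z x; first by rewrite sx tpermR.
have [zD|zD] := boolP (z \in D); last by rewrite (matching_on_out sD) ?tpermD // eq_sym.
have szx : x != s z by apply: contraNneq zy => /esym szx; rewrite -[z](matching_onK sD) szx sx.
have szy : y != s z by apply: contraNneq zx => /esym szy; rewrite -[z](matching_onK sD) szy sy.
rewrite (tpermD szx szy) (matching_onK sD) tpermD 1?eq_sym //.
by split=> //; rewrite eq_sym (matching_on_neq sD).
Qed.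

Lemma matching_on_pair s :
  s \in matching_on (D :\ x :\ y) -> (s * tperm x y)%g \in matching_on D.
Proof.
move=> sD; have fixD := matching_on_out sD.
have sx : s x = x by rewrite fixD // !inE eqxx andbF.
have sy : s y = y by rewrite fixD // !inE eqxx.
apply/matching_onP => z; rewrite !permM.
have [->|zy] := eqVneq z y; first by rewrite yD sy tpermR sx tpermL.
have [->|zx] := eqVneq z x; first by rewrite xD sx tpermL sy tpermR eq_sym.
have [zD|zD] := boolP (z \in D); last by rewrite fixD ?tpermD ?inE ?(negbTE zD) ?andbF // eq_sym.
have zD' : z \in D :\ x :\ y by rewrite !inE zy zx.
move: (matching_on_in sD zD'); rewrite !inE => /and3P [szy szx _].
rewrite [tperm x y (s z)]tpermD 1?eq_sym // (matching_onK sD) tpermD 1?eq_sym //.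
by split=> //; apply: matching_on_neq zD'.
Qed.

Lemma card_matching_on_pair (P : pred {perm S}) :
  #|[set s in matching_on D | (s x == y) && P s]| =
  #|[set s in matching_on (D :\ x :\ y) | P (s * tperm x y)%g]|.
Proof.
have tK s : (s * tperm x y * tperm x y)%g = s by rewrite -mulgA tperm2 mulg1.
rewrite -[RHS](card_imset _ (mulIg (tperm x y))); apply: eq_card => s.
rewrite !inE; apply/andP/imsetP => [[sD /andP [/eqP sx Ps]] | [s' /[!inE] /andP [s'D Ps'] ->]].
  exists (s * tperm x y)%g; last by rewrite tK.
  by rewrite inE tK Ps andbT matching_on_unpair.
rewrite matching_on_pair // Ps' permM (matching_on_out s'D) ?tpermL ?eqxx //.
by rewrite !inE eqxx andbF.
Qed.

End Pair.

Fixpoint nmatchings (n : nat) : nat :=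
  match n with 0 => 1 | 1 => 0 | k.+2 => k.+1 * nmatchings k end.

Lemma card_matching_on D : #|matching_on D| = nmatchings #|D|.
Proof.
move Dn: #|D| => n; elim/ltn_ind: n D Dn => -[|[|n]] IH D Dn /=.
- move/eqP: Dn; rewrite cards_eq0 => /eqP ->; apply/eqP/cards1P; exists 1%g.
  apply/setP => s; rewrite !inE; apply/idP/eqP => [sD|->]; last first.
    by apply/matching_onP => x; rewrite inE perm1.
  by apply/permP => x; rewrite perm1 (matching_on_out sD) ?inE.
- move/eqP/cards1P: Dn => [x ->] /=; apply/eqP; rewrite cards_eq0; apply/eqP/setP => s.
  rewrite inE; apply/negbTE/negP => sD.
  by move: (matching_on_neq sD (set11 x)) (matching_on_in sD (set11 x)); rewrite inE => /negbTE ->.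
- have /card_gt0P [x xD] : (0 < #|D|)%N by rewrite Dn.
  have Dx : #|D :\ x| = n.+1 by move: Dn; rewrite (cardsD1 x) xD => -[].
  rewrite (@card_fibers _ _ _ (fun s => s x) (D :\ x)); last first.
    by move=> s sD; rewrite !inE (matching_on_neq sD xD) (matching_on_in sD xD).
  rewrite (eq_bigr (fun _ => nmatchings n)) ?sum_nat_const ?Dx // => y /[!inE] /andP [yx yD].
  transitivity #|[set s in matching_on D | (s x == y) && predT s]|.
    by apply: eq_card => s; rewrite !inE andbT.
  rewrite card_matching_on_pair 1?eq_sym // -(IH n _ (D :\ x :\ y)) //; last first.
    by move: Dx; rewrite (cardsD1 y) !inE yx yD => -[].
  by apply: eq_card => s; rewrite !inE andbT.
Qed.

End PartialMatchings.

(* The number of ways to pick t disjoint pairs, each joining one of a points to one of b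
   other points. *)
Definition npairings (a b t : nat) : nat := 'C(a, t) * 'C(b, t) * t`!.

Lemma npairings0 a b : npairings a b 0 = 1.
Proof. by rewrite /npairings !bin0. Qed.

Lemma npairings_small a b t : a < t -> npairings a b t = 0.
Proof. by move=> lt_at; rewrite /npairings bin_small. Qed.

Lemma npairingsSS a b t : npairings a.+1 b t.+1 = npairings a b t.+1 + b * npairings a b.-1 t.
Proof.
rewrite /npairings -!mulnA !bin_ffact ffactnS binS mulnDl; congr (_ + _).
by rewrite mulnCA.
Qed.

Section InclusionExclusion.
Variables (S : finType) (R : comRingType).
Local Open Scope ring_scope.

Definition meets (X Y : {set S}) (s : {perm S}) : bool := [exists x in X, s x \in Y].

Lemma meets_set0 (Y : {set S}) s : meets set0 Y s = false.
Proof. by apply/existsP => -[x]; rewrite inE. Qed.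

Lemma meets_setD1 (X Y : {set S}) x s :
  x \in X -> meets X Y s = meets (X :\ x) Y s || (s x \in Y).
Proof.
move=> xX; apply/existsP/orP => [[z /andP [zX szY]] | [/existsP [z] | sxY]].
- by have [<-|zx] := eqVneq z x; [right | left; apply/existsP; exists z; rewrite !inE zx zX].
- by rewrite !inE -andbA => /and3P [_ zX szY]; exists z; rewrite zX.
- by exists x; rewrite xX.
Qed.

Lemma sum_npairingsS (h : nat -> R) a b :
  \sum_(0 <= t < a.+2) (-1) ^+ t * (npairings a.+1 b t)%:R * h t =
  \sum_(0 <= t < a.+1) (-1) ^+ t * (npairings a b t)%:R * h t
  - (\sum_(0 <= t < a.+1) (-1) ^+ t * (npairings a b.-1 t)%:R * h t.+1) *+ b.
Proof.
have -> : \sum_(0 <= t < a.+1) (-1) ^+ t * (npairings a b t)%:R * h t =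
          \sum_(0 <= t < a.+2) (-1) ^+ t * (npairings a b t)%:R * h t.
  by rewrite [in RHS]big_nat_recr //= npairings_small // mulr0 mul0r addr0.
rewrite !(big_nat_recl a.+1) // !npairings0 -addrA; congr (_ + _).
rewrite -sumrMnl -sumrN -big_split /=; apply: eq_bigr => t _.
by rewrite npairingsSS natrD natrM -mulr_natr !exprS; ring.
Qed.

Definition tperm_invariant (E : pred {perm S}) (X Y : {set S}) : Prop :=
  forall (s : {perm S}) x y, x \in X -> y \in Y -> s x = x -> s y = y -> E (s * tperm x y)%g = E s.

Definition count_on_removal (E : pred {perm S}) (D X Y : {set S}) (h : nat -> R) : Prop :=
  forall X' Y' : {set S}, X' \subset X -> Y' \subset Y -> #|X'| = #|Y'| ->
    #|[set s in matching_on (D :\: (X' :|: Y')) | E s]|%:R = h #|X'|.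

Lemma count_on_removal0 E D X Y h :
  count_on_removal E D X Y h -> #|[set s in matching_on D | E s]|%:R = h 0.
Proof.
by move=> Eh; have := Eh set0 set0 (sub0set _) (sub0set _) erefl; rewrite cards0 setU0 setD0.
Qed.

Section Step.
Variables (E : pred {perm S}) (D X Y : {set S}) (x : S).
Hypotheses (XD : X \subset D) (YD : Y \subset D) (dXY : [disjoint X & Y]) (xX : x \in X).

Lemma card_not_meets_setD1 :
  #|[set s in matching_on D | E s && ~~ meets X Y s]|%:R =
  #|[set s in matching_on D | E s && ~~ meets (X :\ x) Y s]|%:R
  - \sum_(y in Y)
      #|[set s in matching_on D | (s x == y) && (E s && ~~ meets (X :\ x) Y s)]|%:R :> R.
Proof.
set m' := fun s => E s && ~~ meets (X :\ x) Y s.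
have -> : #|[set s in matching_on D | E s && ~~ meets X Y s]| =
          #|[set s : {perm S} in matching_on D | m' s && ~~ (s x \in Y)]|.
  by apply: eq_card => s; rewrite !inE (meets_setD1 _ _ xX) negb_or !andbA.
rewrite (card_split_pred _ m' (fun s => s x \in Y)) natrD addrAC.
have -> : #|[set s : {perm S} in matching_on D | m' s && (s x \in Y)]| =
          (\sum_(y in Y) #|[set s in matching_on D | (s x == y) && m' s]|)%N.
  rewrite (@card_fibers _ _ _ (fun s : {perm S} => s x) Y) => [|s]; last by rewrite inE => /and3P [].
  apply: eq_bigr => y yY; apply: eq_card => s; rewrite !inE.
  by case: (eqVneq (s x) y) => [->|]; rewrite ?yY ?andbF ?andbT // andbC.
by rewrite natr_sum subrr add0r.
Qed.

Lemma card_not_meets_fiber y :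
  y \in Y -> tperm_invariant E X Y ->
  #|[set s in matching_on D | (s x == y) && (E s && ~~ meets (X :\ x) Y s)]| =
  #|[set s in matching_on (D :\ x :\ y) | E s && ~~ meets (X :\ x) (Y :\ y) s]|.
Proof.
move=> yY Einv.
have xy : x != y by apply: contraTneq yY => <-; rewrite (disjointFr dXY xX).
rewrite (card_matching_on_pair (subsetP XD x xX) (subsetP YD y yY) xy).
apply: eq_card => s; rewrite !inE; case: (boolP (s \in _)) => //= sD.
have fixD := matching_on_out sD.
have sx : s x = x by rewrite fixD // !inE eqxx andbF.
have sy : s y = y by rewrite fixD // !inE eqxx.
rewrite Einv //; congr (_ && ~~ _); apply: eq_existsb => z; rewrite permM.
case: (boolP (z \in X :\ x)) => //= /[dup] zX'; rewrite !inE => /andP [zx zX].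
have zy : z != y by apply: contraTneq zX => ->; rewrite (disjointFl dXY yY).
have zD : z \in D :\ x :\ y by rewrite !inE zx zy (subsetP XD).
move: (matching_on_in sD zD); rewrite !inE => /and3P [szy szx _].
by rewrite tpermD ?szy // eq_sym.
Qed.

Lemma subset_pair_removal y :
  y \in Y -> (X :\ x \subset D :\ x :\ y) && (Y :\ y \subset D :\ x :\ y).
Proof.
move=> yY; apply/andP; split; apply/subsetP => z /[!inE] /andP [zx_y zXY].
  rewrite zx_y (subsetP XD z zXY) !andbT.
  by apply: contraTneq zXY => ->; rewrite (disjointFl dXY yY).
rewrite zx_y (subsetP YD z zXY) !andbT.
by apply: contraTneq zXY => ->; rewrite (disjointFr dXY xX).
Qed.

Lemma count_on_removal_pair y h :
  y \in Y -> count_on_removal E D X Y h ->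
  count_on_removal E (D :\ x :\ y) (X :\ x) (Y :\ y) (fun t => h t.+1).
Proof.
move=> yY Eh X' Y' sX' sY' cX'Y'.
have xX' : x \notin X' by apply/negP => /(subsetP sX'); rewrite !inE eqxx.
have yY' : y \notin Y' by apply/negP => /(subsetP sY'); rewrite !inE eqxx.
have cxX' : #|x |: X'| = #|X'|.+1 by rewrite cardsU1 xX'.
rewrite -cxX'; have <- := Eh (x |: X') (y |: Y'); first 1 last.
- apply/subsetP => z; rewrite !inE => /orP [/eqP -> // | /(subsetP sX')].
  by rewrite inE => /andP [].
- apply/subsetP => z; rewrite !inE => /orP [/eqP -> // | /(subsetP sY')].
  by rewrite inE => /andP [].
- by rewrite !cardsU1 xX' yY' cX'Y'.
congr (_%:R); apply: eq_card => s; rewrite !inE; congr (_ && _); congr (s \in matching_on _).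
apply/setP => z; rewrite !inE.
by case: (z == x); case: (z == y); case: (z \in X'); case: (z \in Y').
Qed.

End Step.

(* Split on the partner of a stub x of X: if it lies outside Y, induct on X :\ x; if it is
   y in Y, removing the pair {x, y} leaves the same problem for X :\ x and Y :\ y. *)
Lemma card_not_meets (E : pred {perm S}) (D X Y : {set S}) (h : nat -> R) :
  X \subset D -> Y \subset D -> [disjoint X & Y] ->
  tperm_invariant E X Y -> count_on_removal E D X Y h ->
  #|[set s in matching_on D | E s && ~~ meets X Y s]|%:R =
    \sum_(0 <= t < #|X|.+1) (-1) ^+ t * (npairings #|X| #|Y| t)%:R * h t.
Proof.
move Xa: #|X| => a; elim: a D X Y h Xa => [|a IH] D X Y h Xa XD YD dXY Einv Eh.
  move/eqP: Xa; rewrite cards_eq0 => /eqP X0; subst X.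
  rewrite big_nat1 npairings0 expr0 !mul1r -(count_on_removal0 Eh).
  by congr (_%:R); apply: eq_card => s; rewrite !inE meets_set0 andbT.
have /card_gt0P [x xX] : (0 < #|X|)%N by rewrite Xa.
have X'a : #|X :\ x| = a by move: Xa; rewrite (cardsD1 x) xX => -[].
have X'X : X :\ x \subset X := subD1set X x.
have fiber y : y \in Y ->
    #|[set s in matching_on D | (s x == y) && (E s && ~~ meets (X :\ x) Y s)]|%:R =
    \sum_(0 <= t < a.+1) (-1) ^+ t * (npairings a #|Y|.-1 t)%:R * h t.+1 :> R.
  move=> yY; have Y'c : #|Y :\ y| = #|Y|.-1 by rewrite [in RHS](cardsD1 y) yY.
  have /andP [X'D' Y'D'] := subset_pair_removal XD YD dXY xX yY.
  rewrite card_not_meets_fiber // -Y'c; apply: IH => //.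
  - exact: disjointW (subD1set X x) (subD1set Y y) dXY.
  - by move=> s x' y' /(subsetP X'X) x'X /(subsetP (subD1set Y y)); apply: Einv.
  - exact: count_on_removal_pair.
rewrite (card_not_meets_setD1 E D Y xX) (IH D (X :\ x) Y h) //.
- by rewrite (eq_bigr _ fiber) sumr_const sum_npairingsS.
- exact: subset_trans X'X XD.
- exact: disjointWl X'X dXY.
- by move=> s x' y' /(subsetP X'X); apply: Einv.
- by move=> X' Y' /subset_trans/(_ X'X); apply: Eh.
Qed.

End InclusionExclusion.

Section Counts.
Variables (S : finType) (R : comRingType).
Local Open Scope ring_scope.
Implicit Types (D X Y Z : {set S}) (s : {perm S}).

Lemma card_meets_incl_excl (E : pred {perm S}) D X Y (h : nat -> R) :
  X \subset D -> Y \subset D -> [disjoint X & Y] ->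
  tperm_invariant E X Y -> count_on_removal E D X Y h ->
  #|[set s in matching_on D | E s && meets X Y s]|%:R =
    \sum_(1 <= t < #|X|.+1) (-1) ^+ t.+1 * (npairings #|X| #|Y| t)%:R * h t.
Proof.
move=> XD YD dXY Einv Eh.
rewrite -[LHS](addrK #|[set s in matching_on D | E s && ~~ meets X Y s]|%:R).
rewrite -natrD -card_split_pred (count_on_removal0 Eh) (card_not_meets XD YD dXY Einv Eh).
rewrite big_nat_recl // npairings0.
rewrite expr0 !mul1r opprD addrA subrr add0r big_add1 -sumrN.
by apply: eq_bigr => t _; rewrite !exprS; ring.
Qed.

Lemma meets_setDl X X' Z s :
  {in X', forall x, s x \notin Z} -> meets X Z s = meets (X :\: X') Z s.
Proof.
move=> sX'; apply/existsP/existsP => -[x /andP [xX sxZ]]; exists x; rewrite sxZ andbT.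
  by rewrite inE xX andbT; apply: contraTN sxZ => /sX'.
by move: xX; rewrite inE => /andP [].
Qed.

Lemma meets_setDr X Z Z' s :
  {in X, forall x, s x \notin Z'} -> meets X Z s = meets X (Z :\: Z') s.
Proof.
move=> sX; apply/existsP/existsP => -[x /andP [xX sxZ]]; exists x; rewrite xX //=.
  by rewrite inE sxZ andbT sX.
by move: sxZ; rewrite inE => /andP [].
Qed.

Lemma meets_tperm_out X Z s x y :
  x \notin Z -> y \notin Z -> meets X Z (s * tperm x y)%g = meets X Z s.
Proof.
move=> xZ yZ; apply: eq_existsb => z; rewrite permM; congr (_ && _).
by case: tpermP => [->|->|//]; rewrite (negbTE xZ) (negbTE yZ).
Qed.

Lemma meets_tperm_fixed X Z s x y :
  x \notin X -> y \notin X -> s x = x -> s y = y -> meets X Z (s * tperm x y)%g = meets X Z s.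
Proof.
move=> xX yX sx sy; apply: eq_existsb => z; rewrite permM.
case: (boolP (z \in X)) => //= zX; rewrite tpermD //.
  by apply: contraNneq xX => /esym; rewrite -{1}sx => /perm_inj <-.
by apply: contraNneq yX => /esym; rewrite -{1}sy => /perm_inj <-.
Qed.

Lemma card_removal D X Y :
  X \subset D -> Y \subset D -> [disjoint X & Y] -> #|X| = #|Y| ->
  #|D :\: (X :|: Y)| = (#|D| - 2 * #|X|)%N.
Proof.
move=> XD YD dXY cXY; rewrite cardsDS ?subUset ?XD //.
by rewrite cardsU (disjoint_setI0 dXY) cards0 subn0 -cXY addnn -mul2n.
Qed.

Definition adj_count (a b n : nat) : R :=
  \sum_(1 <= t < a.+1) (-1) ^+ t.+1 * (npairings a b t)%:R * (nmatchings (n - 2 * t))%:R.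

Definition cn_count (a b c n : nat) : R :=
  \sum_(1 <= t < b.+1) (-1) ^+ t.+1 * (npairings b c t)%:R * adj_count a (c - t) (n - 2 * t).

Definition tri_count (a b c n : nat) : R :=
  \sum_(1 <= t < a.+1) (-1) ^+ t.+1 * (npairings a b t)%:R * cn_count (a - t) (b - t) c (n - 2 * t).

Lemma card_meets D X Y :
  X \subset D -> Y \subset D -> [disjoint X & Y] ->
  #|[set s in matching_on D | meets X Y s]|%:R = adj_count #|X| #|Y| #|D|.
Proof.
move=> XD YD dXY.
rewrite -(@eq_card _ [set s in matching_on D | predT s && meets X Y s]); last first.
  by move=> s; rewrite !inE.
apply: card_meets_incl_excl => // X' Y' sX' sY' cX'Y'.
rewrite -(card_removal (subset_trans sX' XD) (subset_trans sY' YD)) //; last first.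
  exact: disjointW sX' sY' dXY.
by rewrite -card_matching_on; congr (_%:R); apply: eq_card => s; rewrite !inE andbT.
Qed.

Lemma disjoint_setDl X Y : [disjoint X :\: Y & Y].
Proof. by rewrite -setI_eq0; apply/eqP/setP => z; rewrite !inE andbAC andNb. Qed.

Lemma subset_removal D X Y Z :
  X \subset D -> [disjoint X & Y] -> [disjoint X & Z] -> X \subset D :\: (Y :|: Z).
Proof.
move=> XD dXY dXZ.
by rewrite subsetD XD -setI_eq0 setIUr (disjoint_setI0 dXY) (disjoint_setI0 dXZ) setU0 eqxx.
Qed.

Lemma card_meets_common D X Y Z :
  X \subset D -> Y \subset D -> Z \subset D ->
  [disjoint X & Y] -> [disjoint X & Z] -> [disjoint Y & Z] ->
  #|[set s in matching_on D | meets X Z s && meets Y Z s]|%:R = cn_count #|X| #|Y| #|Z| #|D|.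
Proof.
move=> XD YD ZD dXY dXZ dYZ.
apply: card_meets_incl_excl => //.
  move=> s y z yY zZ sy sz; apply: meets_tperm_fixed => //.
    by rewrite (disjointFl dXY yY).
  by rewrite (disjointFl dXZ zZ).
move=> Y' Z' sY' sZ' cY'Z'; set D' := D :\: (Y' :|: Z').
have XD' : X \subset D' := subset_removal XD (disjointWr sY' dXY) (disjointWr sZ' dXZ).
have dZ'Y' : [disjoint Z :\: Z' & Y'].
  by apply: disjointW (subsetDl Z Z') sY' _; rewrite disjoint_sym.
have ZD' : Z :\: Z' \subset D'.
  exact: subset_removal (subset_trans (subsetDl Z Z') ZD) dZ'Y' (disjoint_setDl Z Z').
rewrite -(@eq_card _ [set s in matching_on D' | meets X (Z :\: Z') s]); last first.
  move=> s; rewrite !inE; case: (boolP (s \in _)) => //= sD'.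
  symmetry; apply: meets_setDr => x /(subsetP XD') /(matching_on_in sD').
  by rewrite !inE negb_or => /andP [/andP [_ ->]].
rewrite card_meets ?(disjointWr (subsetDl Z Z') dXZ) // cardsDS // card_removal //.
- by rewrite cY'Z'.
- exact: subset_trans sY' YD.
- exact: subset_trans sZ' ZD.
- exact: disjointW sY' sZ' dYZ.
Qed.

Lemma card_meets_triangle D X Y Z :
  X \subset D -> Y \subset D -> Z \subset D ->
  [disjoint X & Y] -> [disjoint X & Z] -> [disjoint Y & Z] ->
  #|[set s in matching_on D | [&& meets X Z s, meets Y Z s & meets X Y s]]|%:R =
    tri_count #|X| #|Y| #|Z| #|D|.
Proof.
move=> XD YD ZD dXY dXZ dYZ.
rewrite -(@eq_card _ [set s in matching_on D | (meets X Z s && meets Y Z s) && meets X Y s]).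
  2: by move=> s; rewrite !inE -!andbA.
apply: card_meets_incl_excl => //.
  move=> s x y xX yY _ _.
  by rewrite !meets_tperm_out ?(disjointFr dXZ xX) ?(disjointFr dYZ yY).
move=> X' Y' sX' sY' cX'Y'; set D' := D :\: (X' :|: Y').
have dX'Y' : [disjoint X' & Y'] := disjointW sX' sY' dXY.
have XD' : X :\: X' \subset D'.
  exact: subset_removal (subset_trans (subsetDl X X') XD) (disjoint_setDl X X')
                        (disjointW (subsetDl X X') sY' dXY).
have YD' : Y :\: Y' \subset D'.
  apply: subset_removal (subset_trans (subsetDl Y Y') YD) _ (disjoint_setDl Y Y').
  by apply: disjointW (subsetDl Y Y') sX' _; rewrite disjoint_sym.
have ZD' : Z \subset D'.
  by apply: subset_removal; rewrite // disjoint_sym;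
    [apply: disjointWl sX' dXZ | apply: disjointWl sY' dYZ].
rewrite -(@eq_card _ [set s in matching_on D' | meets (X :\: X') Z s && meets (Y :\: Y') Z s]).
  rewrite card_meets_common ?(disjointWl (subsetDl X X') dXZ) ?(disjointWl (subsetDl Y Y') dYZ) //.
    rewrite /D' card_removal ?(subset_trans sX' XD) ?(subset_trans sY' YD) //.
    by rewrite (cardsDS sX') (cardsDS sY') cX'Y'.
  exact: disjointW (subsetDl X X') (subsetDl Y Y') dXY.
move=> s; rewrite !inE; case: (boolP (s \in _)) => //= sD'.
have fixed x : x \in X' :|: Y' -> s x = x.
  by move=> xXY; rewrite (matching_on_out sD') // /D' inE xXY.
congr (_ && _); symmetry; apply: meets_setDl => x xA; rewrite fixed ?inE ?xA ?orbT //.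
  by rewrite (disjointFr dXZ) ?(subsetP sX').
by rewrite (disjointFr dYZ) ?(subsetP sY').
Qed.

End Counts.

Lemma nmatchings_double_gt0 n : 0 < nmatchings (2 * n).
Proof. by elim: n => // n IH; rewrite mulnS /= muln_gt0. Qed.

Section ClosedForms.
Variable R : realFieldType.
Local Open Scope ring_scope.

Lemma nmatchings_dprod M t : (t <= M)%N ->
  (nmatchings (2 * M))%:R = Defs.dprod R t M * (nmatchings (2 * M - 2 * t))%:R :> R.
Proof.
elim: t => [|t IH] tM; first by rewrite /Defs.dprod big_geq // mul1r subn0.
rewrite IH 1?ltnW // /Defs.dprod (big_nat_recr t.+1) //= -mulrA; congr (_ * _).
have -> : (2 * M - 2 * t = (2 * M - 2 * t.+1).+2)%N by lia.
rewrite /= natrM; congr (_ * _).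
have -> : ((2 * M - 2 * t.+1).+1 = 2 * M + 1 - 2 * t.+1)%N by lia.
by rewrite natrB ?natrD ?natrM; [ring | lia].
Qed.

Lemma nmatchings_double_neq0 n : (nmatchings (2 * n))%:R != 0 :> R.
Proof. by rewrite pnatr_eq0 -lt0n nmatchings_double_gt0. Qed.

Lemma dprod_neq0 M t : (t <= M)%N -> Defs.dprod R t M != 0.
Proof.
move=> tM; apply: contra_neq (nmatchings_double_neq0 M).
by rewrite (nmatchings_dprod tM) => ->; rewrite mul0r.
Qed.

Lemma big_nat_trunc (F : nat -> R) m n k : (m <= n <= k)%N ->
  (forall t, (n <= t < k)%N -> F t = 0) ->
  \sum_(m <= t < k) F t = \sum_(m <= t < n) F t.
Proof.
move=> /andP [mn nk] F0; rewrite (big_cat_nat mn nk) /= [X in _ + X]big_nat_cond.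
by rewrite [X in _ + X]big1 ?addr0 // => t /andP [/F0].
Qed.

Lemma adj_count0r a n : adj_count R a 0 n = 0.
Proof.
rewrite /adj_count big_nat_cond big1 // => t /andP [/andP [t_gt0 _] _].
by rewrite /npairings bin0n eqn0Ngt t_gt0 muln0 mul0n mulr0 mul0r.
Qed.

Lemma cn_count0l b c n : cn_count R 0 b c n = 0.
Proof. by rewrite /cn_count big1 // => t _; rewrite /adj_count big_geq // mulr0. Qed.

Lemma cn_count0m a c n : cn_count R a 0 c n = 0.
Proof. by rewrite /cn_count big_geq. Qed.

Lemma Afun_adj_count a b M : (a + b <= 2 * M)%N ->
  Afun R a b M * (nmatchings (2 * M))%:R = adj_count R a b (2 * M).
Proof.
move=> abM; rewrite /Afun /adj_count mulr_suml.
rewrite [RHS](@big_nat_trunc _ _ (minn a b).+1) ?ltnS ?geq_minl //; last first.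
  move=> t /andP [t_gt t_lt].
  by rewrite /npairings (@bin_small b t) ?muln0 ?mul0n ?mulr0 ?mul0r //; lia.
apply: eq_big_nat => t /andP [t_gt0 t_le]; have tM : (t <= M)%N by lia.
rewrite (nmatchings_dprod tM) /npairings; have := dprod_neq0 tM.
by set d := Defs.dprod R t M => d_neq0; field.
Qed.

Lemma Cfun_cn_count a b c M : (a + b + c <= 2 * M)%N ->
  Cfun R a b c M * (nmatchings (2 * M))%:R = cn_count R a b c (2 * M).
Proof.
move=> abcM; rewrite /Cfun /cn_count mulr_suml.
rewrite [RHS](@big_nat_trunc _ _ (minn b c.-1).+1) ?ltnS ?geq_minl //; last first.
  move=> t /andP [t_gt t_lt]; have [<-|tc] := eqVneq t c; first by rewrite subnn adj_count0r mulr0.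
  by rewrite /npairings (@bin_small c t) ?muln0 ?mul0n ?mulr0 ?mul0r //; lia.
apply: eq_big_nat => t /andP [t_gt0 t_le]; have tM : (t <= M)%N by lia.
rewrite (nmatchings_dprod tM).
have -> : (2 * M - 2 * t = 2 * (M - t))%N by lia.
rewrite -Afun_adj_count /npairings; last by lia.
have := dprod_neq0 tM; set d := Defs.dprod R t M => d_neq0.
by rewrite (mulnC 'C(b, t)); field.
Qed.

Lemma Tfun_tri_count a b c M : (a + b + c <= 2 * M)%N ->
  Tfun R a b c M * (nmatchings (2 * M))%:R = tri_count R a b c (2 * M).
Proof.
move=> abcM; rewrite /Tfun /tri_count mulr_suml.
rewrite [RHS](@big_nat_trunc _ _ (minn a.-1 b.-1).+1); first last.
- move=> t /andP [t_gt t_lt].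
  have [<-|ta] := eqVneq t a; first by rewrite subnn cn_count0l mulr0.
  have [<-|tb] := eqVneq t b; first by rewrite subnn cn_count0m mulr0.
  by rewrite /npairings (@bin_small b t) ?muln0 ?mul0n ?mulr0 ?mul0r //; lia.
- by rewrite ltnS; lia.
apply: eq_big_nat => t /andP [t_gt0 t_le]; have tM : (t <= M)%N by lia.
rewrite (nmatchings_dprod tM).
have -> : (2 * M - 2 * t = 2 * (M - t))%N by lia.
rewrite -Cfun_cn_count /npairings; last by lia.
have := dprod_neq0 tM; set d := Defs.dprod R t M => d_neq0.
by field.
Qed.

End ClosedForms.

Section Stubs.
Variables (V : finType) (e : rel V).

Definition stubs (u : V) : {set stub e} := [set x | tag x == u].

Lemma card_stubs u : #|stubs u| = deg e u.
Proof.
have Tinj : injective (@Tagged V u (fun v => 'I_(deg e v))).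
  move=> k1 k2 E; rewrite -(tagged_asE (u := Tagged (fun v => 'I_(deg e v)) k1) k1).
  by rewrite {2}E tagged_asE.
rewrite -[RHS]card_ord -(card_imset _ Tinj); apply: eq_card => -[v k].
rewrite !inE; apply/eqP/imsetP => [/= vu | [k' _ ->] //].
by subst v; exists k.
Qed.

Lemma stubs_disjoint u v : u != v -> [disjoint stubs u & stubs v].
Proof.
move=> uv; rewrite -setI_eq0; apply/eqP/setP => x; rewrite !inE.
by apply: contraNF uv => /andP [/eqP <- /eqP ->].
Qed.

Lemma conn_meets s u v : conn s u v = meets (stubs u) (stubs v) s.
Proof. by apply: eq_existsb => x; rewrite !inE. Qed.

Lemma matchingsE : matchings e = matching_on [set: stub e].
Proof.
apply/setP => s; rewrite inE; apply/forallP/matching_onP => sM x; have := sM x; rewrite inE.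
  by case/andP => /eqP.
by case=> -> ->; rewrite eqxx.
Qed.

End Stubs.

Section Handshake.
Variables (V : finType) (e : rel V).
Hypotheses (e_sym : symmetric e) (e_irr : irreflexive e).

Let arcs := [set p : V * V | e p.1 p.2].

Lemma sum_deg_arcs : \sum_u deg e u = #|arcs|.
Proof.
rewrite (@card_fibers _ _ _ fst [set: V]) //; apply: eq_big => [u | u _]; first by rewrite inE.
have pair_inj : injective (pair u : V -> V * V) by move=> v w [].
rewrite /deg -(card_imset _ pair_inj); apply: eq_card => -[a b]; rewrite !inE.
apply/imsetP/andP => [[v /[!inE] euv [-> ->]] // | [eab /eqP /= au]].
by subst a; exists b; rewrite ?inE.
Qed.

Lemma card_arcs_edge u v :
  e u v -> #|[set p in arcs | [set p.1; p.2] == [set u; v]]| = 2.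
Proof.
move=> euv; have uv : u != v by apply: contraTneq euv => ->; rewrite e_irr.
have -> : 2 = #|[set (u, v); (v, u)]| by rewrite cards2 xpair_eqE (negbTE uv).
apply: eq_card => -[a b]; rewrite !inE /= !xpair_eqE; apply/andP/idP => [[eab /eqP Eab] | ].
  have /andP [] : (a \in [set u; v]) && (b \in [set u; v]) by rewrite -Eab !inE !eqxx orbT.
  rewrite !inE => /orP [] /eqP ? /orP [] /eqP ?; subst; rewrite ?eqxx ?orbT //.
    by rewrite e_irr in eab.
  by rewrite e_irr in eab.
by case/orP => /andP [/eqP -> /eqP ->]; rewrite ?(e_sym v) euv // setUC.
Qed.

Lemma sum_deg : \sum_u deg e u = 2 * nedges e.
Proof.
rewrite sum_deg_arcs (@card_fibers _ _ _ (fun p => [set p.1; p.2]) (edge_set e)); last first.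
  move=> [a b]; rewrite !inE /= => eab.
  by apply/existsP; exists a; apply/existsP; exists b; rewrite eab eqxx.
rewrite /nedges mulnC -sum_nat_const; apply: eq_bigr => E.
by rewrite inE => /existsP [u /existsP [v /andP [euv /eqP ->]]]; apply: card_arcs_edge.
Qed.

Lemma card_stub : #|[set: stub e]| = 2 * nedges e.
Proof.
rewrite -sum_deg (@card_fibers _ _ _ (@tag V _) [set: V]) //.
by apply: eq_big => [u | u _]; rewrite ?inE // -card_stubs; apply: eq_card => x; rewrite !inE.
Qed.

End Handshake.

Section Neighbourhoods.
Local Open Scope ring_scope.
Variables (V : finType) (e : rel V).
Implicit Types (s : {perm stub e}) (i j r : V).

Lemma ncn_sum (R : ringType) s i j :
  (ncn s i j)%:R = \sum_(r | (r != i) && (r != j)) (conn s i r && conn s j r)%:R :> R.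
Proof.
rewrite /ncn -sum1_card natr_sum [RHS]big_mkcond [LHS]big_mkcond /=.
by apply: eq_bigr => r _; rewrite !inE; case: (r != i); case: (r != j) => //=; case: (_ && _).
Qed.

Lemma ncn_eq0 s i j : s \in matchings e -> (deg e i = 1%N \/ deg e j = 1%N) ->
  conn s i j -> ncn s i j = 0%N.
Proof.
rewrite matchingsE => sM deg1 cij; apply/eqP; rewrite cards_eq0; apply/eqP/setP => r.
rewrite !inE; apply/negbTE/negP => /and4P [ri rj cir cjr].
move: cij cir cjr; rewrite !conn_meets => /existsP [x /andP [xi sxj]].
move=> /existsP [x' /andP [x'i sx'r]] /existsP [y /andP [yj syr]].
case: deg1 => deg1.
- have /card_le1_eqP /(_ x x' xi x'i) xx' : (#|stubs e i| <= 1)%N by rewrite card_stubs deg1.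
  by move: sxj sx'r rj; rewrite xx' !inE => /eqP -> /eqP ->; rewrite eqxx.
- have /card_le1_eqP /(_ _ _ sxj yj) yE : (#|stubs e j| <= 1)%N by rewrite card_stubs deg1.
  by move: syr xi ri; rewrite yE (matching_onK sM) !inE => /eqP -> /eqP ->; rewrite eqxx.
Qed.

Hypotheses (e_sym : symmetric e) (e_irr : irreflexive e).

Lemma deg2_le i j : i != j -> (deg e i + deg e j <= 2 * nedges e)%N.
Proof.
move=> ij; rewrite -(sum_deg e_sym e_irr) (bigD1 i) //= (bigD1 j) /= 1?eq_sym //.
by rewrite addnA leq_addr.
Qed.

Lemma deg3_le i j r : i != j -> r != i -> r != j ->
  (deg e i + deg e j + deg e r <= 2 * nedges e)%N.
Proof.
move=> ij ri rj; rewrite -(sum_deg e_sym e_irr) (bigD1 i) //= (bigD1 j) /= 1?eq_sym //.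
by rewrite (bigD1 r) /= ?ri ?rj // !addnA leq_addr.
Qed.

End Neighbourhoods.

Section UniformMatching.
Variables (R : realFieldType) (V : finType) (e : rel V).
Local Open Scope ring_scope.
Implicit Types (f g : {perm stub e} -> R) (b : pred {perm stub e}).

Lemma eq_Expect f g : {in matchings e, f =1 g} -> Expect e f = Expect e g.
Proof. by move=> fg; rewrite /Expect (eq_bigr _ fg). Qed.

Lemma ExpectD f g : Expect e (fun s => f s + g s) = Expect e f + Expect e g.
Proof. by rewrite /Expect big_split mulrDl. Qed.

Lemma ExpectB f g : Expect e (fun s => f s - g s) = Expect e f - Expect e g.
Proof. by rewrite /Expect sumrB mulrBl. Qed.

Lemma ExpectZ a f : Expect e (fun s => a * f s) = a * Expect e f.
Proof. by rewrite /Expect -mulr_sumr mulrA. Qed.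

Lemma Expect_sum (I : finType) (P : pred I) (F : I -> {perm stub e} -> R) :
  Expect e (fun s => \sum_(r | P r) F r s) = \sum_(r | P r) Expect e (F r).
Proof. by rewrite /Expect exchange_big mulr_suml. Qed.

Lemma eq_Prob b1 b2 : b1 =1 b2 -> Prob e R b1 = Prob e R b2.
Proof. by move=> b12; rewrite /Prob; congr (_%:R / _); apply: eq_card => s; rewrite !inE b12. Qed.

Lemma Prob_card b :
  Prob e R b = #|[set s in matching_on [set: stub e] | b s]|%:R / (nmatchings #|[set: stub e]|)%:R.
Proof. by rewrite /Prob matchingsE card_matching_on. Qed.

Lemma Expect_indicator b : Expect e (fun s => (b s)%:R) = Prob e R b.
Proof.
rewrite /Expect /Prob; congr (_ / _).
rewrite -sum1_card natr_sum big_mkcond [RHS]big_mkcond /=; apply: eq_bigr => s _.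
by rewrite [in RHS]inE; case: (s \in matchings e); case: (b s).
Qed.

End UniformMatching.

Section Weight.
Variables (R : realFieldType) (V : finType) (e : rel V) (i j : V).
Local Open Scope ring_scope.

Let P := Pij e R i j.
Let adj (s : {perm stub e}) : R := (conn s i j)%:R.
Let cn (s : {perm stub e}) r : R := (conn s i r && conn s j r)%:R.
Let tri (s : {perm stub e}) r : R := [&& conn s i r, conn s j r & conn s i j]%:R.

Lemma weight_deg1 s : (deg e i = 1%N \/ deg e j = 1%N) -> s \in matchings e ->
  weight R s i j = P / 4 * (\sum_(r | (r != i) && (r != j)) cn s r) + P * adj s.
Proof.
move=> deg1 sM; rewrite /weight /CNij /adj /cn -/P -ncn_sum.
case: (boolP (conn s i j)) => /= [cij | _]; last by rewrite -addn1 natrD; ring.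
have -> : (deg e i == 1%N) || (deg e j == 1%N) by case: deg1 => ->; rewrite eqxx ?orbT.
by rewrite (ncn_eq0 sM deg1 cij); ring.
Qed.

Lemma weight_deg2 s : (1 < deg e i)%N -> (1 < deg e j)%N ->
  weight R s i j = P / 4 * (\sum_(r | (r != i) && (r != j)) (cn s r - tri s r))
                   + 2 * P * (\sum_(r | (r != i) && (r != j)) tri s r) + 3 * P * adj s.
Proof.
move=> deg_i deg_j; rewrite /weight /CNij /adj /cn /tri -/P (gtn_eqF deg_i) (gtn_eqF deg_j) /=.
case: (boolP (conn s i j)) => /= cij.
  rewrite [X in P / 4 * X]big1 => [|r _]; last by rewrite andbT subrr.
  under eq_bigr do rewrite andbT.
  by rewrite -ncn_sum -addn1 natrD; ring.
rewrite [X in 2 * P * X]big1 => [|r _]; last by rewrite !andbF.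
under eq_bigr do rewrite !andbF subr0.
by rewrite -ncn_sum -addn1 natrD; ring.
Qed.

Lemma Expect_weight_deg1 : (deg e i = 1%N \/ deg e j = 1%N) ->
  Expect e (fun s => weight R s i j) =
    P * (\sum_(r | (r != i) && (r != j)) Prob e R (fun s => conn s i r && conn s j r)) / 4
    + P * Prob e R (fun s => conn s i j).
Proof.
move=> deg1; rewrite (eq_Expect (fun s sM => @weight_deg1 s deg1 sM)) ExpectD !ExpectZ Expect_sum.
under eq_bigr do rewrite Expect_indicator.
by rewrite Expect_indicator mulrAC.
Qed.

Lemma Expect_weight_deg2 : (1 < deg e i)%N -> (1 < deg e j)%N ->
  Expect e (fun s => weight R s i j) =
    P / 4 * (\sum_(r | (r != i) && (r != j))
               (Prob e R (fun s => conn s i r && conn s j r)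
                - Prob e R (fun s => [&& conn s i r, conn s j r & conn s i j])))
    + 2 * P * (\sum_(r | (r != i) && (r != j))
                 Prob e R (fun s => [&& conn s i r, conn s j r & conn s i j]))
    + 3 * P * Prob e R (fun s => conn s i j).
Proof.
move=> deg_i deg_j; rewrite (eq_Expect (fun s _ => @weight_deg2 s deg_i deg_j)).
rewrite !ExpectD !ExpectZ !Expect_sum Expect_indicator.
under eq_bigr do rewrite ExpectB !Expect_indicator.
by under [X in 2 * P * X]eq_bigr do rewrite Expect_indicator.
Qed.

End Weight.

Section ConfigurationModel.
Variables (R : realFieldType) (V : finType) (e : rel V).
Hypotheses (e_sym : symmetric e) (e_irr : irreflexive e).
Local Open Scope ring_scope.

Let card_stubT := card_stub e_sym e_irr.
Let cancel_nmatchings := mulfK (nmatchings_double_neq0 R (nedges e)).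

Lemma Prob_conn i j : i != j ->
  Prob e R (fun s => conn s i j) = Afun R (deg e i) (deg e j) (nedges e).
Proof.
move=> ij; transitivity (Prob e R (meets (stubs e i) (stubs e j))).
  by apply: eq_Prob => s; rewrite conn_meets.
rewrite Prob_card card_meets ?subsetT ?stubs_disjoint // !card_stubs card_stubT.
by rewrite -Afun_adj_count ?cancel_nmatchings // (deg2_le e_sym e_irr ij).
Qed.

Lemma Prob_common_neighbour i j r : i != j -> r != i -> r != j ->
  Prob e R (fun s => conn s i r && conn s j r) =
    Cfun R (deg e i) (deg e j) (deg e r) (nedges e).
Proof.
move=> ij ri rj; have ir : i != r by rewrite eq_sym.
have jr : j != r by rewrite eq_sym.
transitivity (Prob e R (fun s => meets (stubs e i) (stubs e r) s &&
                                  meets (stubs e j) (stubs e r) s)).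
  by apply: eq_Prob => s; rewrite !conn_meets.
rewrite Prob_card card_meets_common ?subsetT ?stubs_disjoint // !card_stubs card_stubT.
by rewrite -Cfun_cn_count ?cancel_nmatchings // (deg3_le e_sym e_irr ij ri rj).
Qed.

Lemma Prob_triangle i j r : i != j -> r != i -> r != j ->
  Prob e R (fun s => [&& conn s i r, conn s j r & conn s i j]) =
    Tfun R (deg e i) (deg e j) (deg e r) (nedges e).
Proof.
move=> ij ri rj; have ir : i != r by rewrite eq_sym.
have jr : j != r by rewrite eq_sym.
transitivity (Prob e R (fun s => [&& meets (stubs e i) (stubs e r) s,
                                      meets (stubs e j) (stubs e r) s &
                                      meets (stubs e i) (stubs e j) s])).
  by apply: eq_Prob => s; rewrite !conn_meets.
rewrite Prob_card card_meets_triangle ?subsetT ?stubs_disjoint // !card_stubs card_stubT.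
by rewrite -Tfun_tri_count ?cancel_nmatchings // (deg3_le e_sym e_irr ij ri rj).
Qed.

End ConfigurationModel.

Local Open Scope ring_scope.

Theorem theorem1 (R : realFieldType) (V : finType) (e : rel V)
  (e_sym : symmetric e) (e_irr : irreflexive e)
  (hm : (1 <= nedges e)%N) (i j : V) (hij : i != j)
  (hki : (1 <= deg e i)%N) (hkj : (1 <= deg e j)%N) :
  let P := Pij e R i j in
  let m := nedges e in
  let Padj := Prob e R (fun s => conn s i j) in
  let Pcn := fun r => Prob e R (fun s => conn s i r && conn s j r) in
  let Ptri := fun r => Prob e R (fun s => [&& conn s i r, conn s j r & conn s i j]) in
  let EW := Expect e (fun s => weight R s i j) in
  [/\ ((deg e i = 1%N \/ deg e j = 1%N) ->
        EW = P * (\sum_(r | (r != i) && (r != j)) Pcn r) / 4 + P * Padj),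
      ((1 < deg e i)%N -> (1 < deg e j)%N ->
        EW = P / 4 * (\sum_(r | (r != i) && (r != j)) (Pcn r - Ptri r))
             + 2 * P * (\sum_(r | (r != i) && (r != j)) Ptri r) + 3 * P * Padj),
      Padj = Afun R (deg e i) (deg e j) m &
      forall r, r != i -> r != j ->
        Pcn r = Cfun R (deg e i) (deg e j) (deg e r) m /\
        Ptri r = Tfun R (deg e i) (deg e j) (deg e r) m].
Proof.
move=> P m Padj Pcn Ptri EW; split.
- exact: Expect_weight_deg1.
- exact: Expect_weight_deg2.
- exact: Prob_conn.
- by move=> r ri rj; split; [apply: Prob_common_neighbour | apply: Prob_triangle].
Qed.
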